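(* Let $G$ be a connected graph with at least $3$ vertices such that $D(G)$ is an infinite cardinal. Then $D'(G)\le D(G)$.
   Context: Graphs are simple and may be infinite. A colouring (of vertices or edges) is distinguishing if the identity is the only automorphism of $G$ preserving it, where $\gamma$ preserves a vertex colouring $c$ if $c\circ\gamma=c$ and an edge colouring $d$ if $d(\gamma(u)\gamma(v))=d(uv)$ for all edges $uv$. $D(G)$ is the least number (cardinal) of colours in a distinguishing vertex colouring, and $D'(G)$ the least number of colours in a distinguishing edge colouring. *)

(* graphs may be infinite, so we work with arbitrary types and
   Prop-valued adjacency relations; cardinals are compared via injections. *)
From Stdlib Require Import Relations Relation_Operators.

Definition simple_graph {V : Type} (adj : V -> V -> Prop) : Prop :=
  (forall u v, adj u v -> adj v u) /\ (forall v, ~ adj v v).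

Definition connected {V : Type} (adj : V -> V -> Prop) : Prop :=
  forall u v : V, clos_refl_trans V adj u v.

Definition at_least_three_vertices (V : Type) : Prop :=
  exists a b c : V, a <> b /\ b <> c /\ a <> c.

Definition injective {A B : Type} (f : A -> B) : Prop :=
  forall x y, f x = f y -> x = y.

Definition bijective {A B : Type} (f : A -> B) : Prop :=
  injective f /\ forall y, exists x, f x = y.

Definition automorphism {V : Type} (adj : V -> V -> Prop) (g : V -> V) : Prop :=
  bijective g /\ forall u v, adj u v <-> adj (g u) (g v).

Definition distinguishing_vcol {V C : Type} (adj : V -> V -> Prop) (c : V -> C) : Prop :=
  forall g, automorphism adj g -> (forall v, c (g v) = c v) -> forall v, g v = v.

(* An edge colouring with colours in C: a function d on ordered pairs whose
   value on an edge uv does not depend on the orientation (values on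
   non-edges are irrelevant). *)
Definition edge_colouring {V C : Type} (adj : V -> V -> Prop) (d : V -> V -> C) : Prop :=
  forall u v, adj u v -> d u v = d v u.

Definition distinguishing_ecol {V C : Type} (adj : V -> V -> Prop) (d : V -> V -> C) : Prop :=
  forall g, automorphism adj g ->
    (forall u v, adj u v -> d (g u) (g v) = d u v) -> forall v, g v = v.

(* |C| = D(G): C admits a distinguishing vertex colouring, and |C| <= |C'|
   for every colour set C' admitting one. *)
Definition is_D {V : Type} (adj : V -> V -> Prop) (C : Type) : Prop :=
  (exists c : V -> C, distinguishing_vcol adj c) /\
  (forall (C' : Type) (c' : V -> C'), distinguishing_vcol adj c' ->
     exists f : C -> C', injective f).

Definition infinite_type (C : Type) : Prop :=
  forall n : nat, ~ exists f : C -> {k : nat | k < n}, injective f.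

(* Fix a distinguishing vertex colouring c with colours in the infinite set C
   and a vertex r with two distinct neighbours s and t.  Since C is infinite,
   an injection of C into C leaves three colours free; give rs and rt two of
   them, give every edge of a breadth-first spanning tree rooted at r the
   (injected) colour of its endpoint farther from r, and all remaining edges
   the third free colour.  An automorphism preserving this edge colouring
   fixes r (the common end of rs and rt), hence preserves distances from r,
   hence maps each tree edge onto a tree edge with its deeper end first; so it
   preserves c and is the identity. *)
From Stdlib Require Import Relation_Operators Operators_Properties.
From Stdlib Require Import Classical ClassicalEpsilon Lia List Arith Wf_nat.

Set Implicit Arguments.

Lemma infinite_type_fresh (C : Type) :
  infinite_type C -> forall l : list C, exists x, ~ In x l.
Proof.
  intros Hinf l. apply NNPP; intro Hall.
  assert (Hpos : forall x, {n : nat | n < length l /\ nth_error l n = Some x}).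
  { intro x. apply constructive_indefinite_description.
    assert (Hx : In x l) by (apply NNPP; intro Hx; apply Hall; eauto).
    destruct (In_nth_error l x Hx) as [n Hn]. exists n. split; [|exact Hn].
    apply nth_error_Some. congruence. }
  apply (Hinf (length l)).
  exists (fun x => exist _ (proj1_sig (Hpos x)) (proj1 (proj2_sig (Hpos x)))).
  intros x y Hxy. apply (f_equal (@proj1_sig _ _)) in Hxy; simpl in Hxy.
  pose proof (proj2 (proj2_sig (Hpos x))) as Hx.
  pose proof (proj2 (proj2_sig (Hpos y))) as Hy.
  rewrite Hxy in Hx. congruence.
Qed.

Section NatEmbedding.

Variables (C : Type) (Hinf : infinite_type C).

Definition fresh (l : list C) : C :=
  proj1_sig (constructive_indefinite_description _ (infinite_type_fresh Hinf l)).

Lemma fresh_notin (l : list C) : ~ In (fresh l) l.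
Proof. unfold fresh. apply proj2_sig. Qed.

Fixpoint fresh_prefix (n : nat) : list C :=
  match n with
  | 0 => nil
  | S m => fresh (fresh_prefix m) :: fresh_prefix m
  end.

Lemma fresh_in_prefix n m : n < m -> In (fresh (fresh_prefix n)) (fresh_prefix m).
Proof.
  induction m as [|m IH]; intro Hnm; [lia|]; simpl.
  destruct (Nat.eq_dec n m) as [->|Hne]; [now left|right; apply IH; lia].
Qed.

Lemma infinite_type_nat_embedding : exists e : nat -> C, injective e.
Proof.
  exists (fun n => fresh (fresh_prefix n)). intros n m E.
  destruct (Nat.lt_trichotomy n m) as [L|[L|L]]; auto; exfalso.
  - apply (fresh_notin (fresh_prefix m)). rewrite <- E. now apply fresh_in_prefix.
  - apply (fresh_notin (fresh_prefix n)). rewrite E. now apply fresh_in_prefix.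
Qed.

End NatEmbedding.

(* Hilbert's hotel: the guest in room [e n] moves to room [e (k + n)]. *)
Section HilbertHotel.

Variables (C : Type) (e : nat -> C) (k : nat).
Hypothesis e_inj : injective e.

Definition hotel_shift (x : C) : C :=
  match excluded_middle_informative (exists n, x = e n) with
  | left H => e (k + proj1_sig (constructive_indefinite_description _ H))
  | right _ => x
  end.

Lemma hotel_shift_avoids i x : i < k -> hotel_shift x <> e i.
Proof.
  intro Hi. unfold hotel_shift.
  destruct (excluded_middle_informative _) as [H|H].
  - destruct (constructive_indefinite_description _ H) as [n Hn]; simpl.
    intro E; apply e_inj in E; lia.
  - intro E; apply H; eauto.
Qed.

Lemma hotel_shift_injective : injective hotel_shift.
Proof.
  intros x y. unfold hotel_shift.
  destruct (excluded_middle_informative (exists n, x = e n)) as [Hx|Hx];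
  destruct (excluded_middle_informative (exists n, y = e n)) as [Hy|Hy].
  - destruct (constructive_indefinite_description _ Hx) as [n Hn];
    destruct (constructive_indefinite_description _ Hy) as [m Hm]; simpl.
    intro E; apply e_inj in E. rewrite Hn, Hm. f_equal; lia.
  - destruct (constructive_indefinite_description _ Hx) as [n Hn]; simpl.
    intros <-; exfalso; eauto.
  - destruct (constructive_indefinite_description _ Hy) as [n Hn]; simpl.
    intros ->; exfalso; eauto.
  - auto.
Qed.

End HilbertHotel.

Lemma exists_vertex_with_two_neighbours (V : Type) (adj : V -> V -> Prop) :
  (forall u v, adj u v -> adj v u) -> connected adj -> at_least_three_vertices V ->
  exists r s t, adj r s /\ adj r t /\ s <> t.
Proof.
  intros Hsym Hconn [a [b [c [Hab [Hbc Hac]]]]]. apply NNPP; intro Hn.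
  assert (Huniq : forall x y z, adj x y -> adj x z -> y = z).
  { intros x y z Hy Hz. apply NNPP; intro; apply Hn; exists x, y, z; auto. }
  (* with all degrees at most one, the component of [a] is [a] and one neighbour *)
  assert (Hcl : forall y, clos_refl_trans V adj a y -> y = a \/ adj a y).
  { intros y Hy. apply clos_rt_rtn1 in Hy. induction Hy as [|y z Hyz Hy [->|Hay]].
    - now left.
    - now right.
    - left. symmetry. apply (Huniq y); auto. }
  destruct (Hcl b (Hconn a b)) as [E|Hb]; [congruence|].
  destruct (Hcl c (Hconn a c)) as [E|Hc]; [congruence|].
  apply Hn; exists a, b, c; auto.
Qed.

Section BreadthFirst.

Variables (V : Type) (adj : V -> V -> Prop) (r : V).

Fixpoint reach_in (n : nat) (v : V) : Prop :=
  match n with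
  | 0 => v = r
  | S m => exists u, reach_in m u /\ adj u v
  end.

Definition is_depth (v : V) (n : nat) : Prop :=
  reach_in n v /\ forall m, reach_in m v -> n <= m.

Definition depth (v : V) : nat := epsilon (inhabits 0) (is_depth v).

Definition parent (v : V) : V :=
  epsilon (inhabits r) (fun u => adj u v /\ S (depth u) = depth v).

Lemma is_depth_unique v n m : is_depth v n -> is_depth v m -> n = m.
Proof. intros [Hn Hn'] [Hm Hm']. apply Nat.le_antisymm; auto. Qed.

Lemma reach_in_automorphism g :
  automorphism adj g -> g r = r -> forall n v, reach_in n v <-> reach_in n (g v).
Proof.
  intros [[Hinj Hsurj] Hadj] Hr n. induction n as [|n IH]; intro v; simpl.
  - split; [now intros ->|intro E; apply Hinj; congruence].
  - split.
    + intros [u [Hu Huv]]. exists (g u). now rewrite <- IH, <- Hadj.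
    + intros [u [Hu Huv]]. destruct (Hsurj u) as [w <-]. exists w.
      now rewrite IH, Hadj.
Qed.

Hypothesis Hconn : connected adj.

Lemma depth_spec v : is_depth v (depth v).
Proof.
  unfold depth. apply epsilon_spec.
  assert (Hreach : exists n, reach_in n v).
  { pose proof (clos_rt_rtn1 _ _ _ _ (Hconn r v)) as Hrv.
    induction Hrv as [|y z Hyz _ [n Hn]]; [now exists 0|].
    exists (S n); simpl; eauto. }
  destruct (dec_inh_nat_subset_has_unique_least_element _ (fun n => classic _) Hreach)
    as [n [Hn _]].
  now exists n.
Qed.

Lemma parent_spec v : v <> r -> adj (parent v) v /\ S (depth (parent v)) = depth v.
Proof.
  intro Hv. unfold parent. apply epsilon_spec.
  destruct (depth_spec v) as [Hreach Hmin].
  destruct (depth v) as [|m] eqn:Ev; [contradiction|].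
  destruct Hreach as [u [Hu Huv]]. exists u. split; [exact Huv|].
  destruct (depth_spec u) as [Hdu Hdu_min].
  assert (depth u <= m) by now apply Hdu_min.
  assert (S m <= S (depth u)) by (apply Hmin; simpl; eauto).
  lia.
Qed.

Lemma depth_automorphism g :
  automorphism adj g -> g r = r -> forall v, depth (g v) = depth v.
Proof.
  intros Hg Hr v. apply (is_depth_unique (v := g v)); [apply depth_spec|].
  destruct (depth_spec v) as [Hv Hmin]. split.
  - now apply reach_in_automorphism.
  - intros m Hm. apply Hmin. eapply reach_in_automorphism; eauto.
Qed.

End BreadthFirst.

Definition joins {V : Type} (u v x y : V) : Prop := (u = x /\ v = y) \/ (u = y /\ v = x).

Section RootedTreeColouring.

Variables (V K C : Type) (adj : V -> V -> Prop).
Hypotheses (Hsimple : simple_graph adj) (Hconn : connected adj).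
Variables (r s t : V).
Hypotheses (Hrs : adj r s) (Hrt : adj r t) (Hst : s <> t).
Variables (c : V -> K) (code : K -> C) (a0 a1 a2 : C).
Hypothesis code_inj : injective code.
Hypotheses (code_a0 : forall x, code x <> a0) (code_a1 : forall x, code x <> a1)
  (code_a2 : forall x, code x <> a2).
Hypotheses (a01 : a0 <> a1) (a02 : a0 <> a2) (a12 : a1 <> a2).

Local Notation depth := (depth adj r).
Local Notation parent := (parent adj r).

Definition rooted_tree_colouring (u v : V) : C :=
  if excluded_middle_informative (joins u v r s) then a1
  else if excluded_middle_informative (joins u v r t) then a2
  else if excluded_middle_informative (u = parent v /\ v <> r) then code (c v)
  else if excluded_middle_informative (v = parent u /\ u <> r) then code (c u)
  else a0.

Local Notation d := rooted_tree_colouring.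

Ltac case_colouring :=
  unfold rooted_tree_colouring, joins in *;
  repeat destruct (excluded_middle_informative _).

Ltac colour_clash :=
  match goal with
  | E : code _ = _ |- _ =>
      first [exact (code_a0 _ E) | exact (code_a1 _ E) | exact (code_a2 _ E)]
  | E : _ = code _ |- _ =>
      first [exact (code_a0 _ (eq_sym E)) | exact (code_a1 _ (eq_sym E))
            | exact (code_a2 _ (eq_sym E))]
  | _ => congruence
  end.

Lemma parent_not_mutual u v : u = parent v -> v <> r -> v = parent u -> u <> r -> False.
Proof.
  intros Hu Hv Hv' Hu'.
  destruct (parent_spec (r := r) Hconn Hv) as [_ Dv].
  destruct (parent_spec (r := r) Hconn Hu') as [_ Du].
  rewrite <- Hu in Dv; rewrite <- Hv' in Du; lia.
Qed.

Lemma rooted_tree_colouring_edge_colouring : edge_colouring adj d.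
Proof.
  intros u v _. case_colouring; try reflexivity; exfalso; try tauto.
  eapply parent_not_mutual with (u := u) (v := v); tauto.
Qed.

Lemma rooted_tree_colouring_a1 x y : d x y = a1 -> joins x y r s.
Proof. case_colouring; auto; intro E; exfalso; colour_clash. Qed.

Lemma rooted_tree_colouring_a2 x y : d x y = a2 -> joins x y r t.
Proof. case_colouring; auto; intro E; exfalso; colour_clash. Qed.

Lemma rooted_tree_colouring_code x y z : d x y = code z ->
  (S (depth x) = depth y /\ c y = z) \/ (S (depth y) = depth x /\ c x = z).
Proof.
  case_colouring; intro E; try (exfalso; colour_clash; fail).
  all: match goal with H : _ = parent _ /\ _ |- _ => destruct H as [-> Hroot] end.
  - left. split; [now apply parent_spec|now apply code_inj].
  - right. split; [now apply parent_spec|now apply code_inj].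
Qed.

Lemma rooted_tree_colouring_parent v :
  v <> r -> v <> s -> v <> t -> d (parent v) v = code (c v).
Proof. intros Hr Hs Ht. case_colouring; tauto. Qed.

Section PreservingAutomorphism.

Variable g : V -> V.
Hypothesis Hg : automorphism adj g.
Hypothesis Hpres : forall u v, adj u v -> d (g u) (g v) = d u v.

Lemma preserving_automorphism_fixes_root : g r = r /\ g s = s /\ g t = t.
Proof.
  assert (Hsr : s <> r) by (intros ->; exact (proj2 Hsimple r Hrs)).
  assert (Htr : t <> r) by (intros ->; exact (proj2 Hsimple r Hrt)).
  assert (Ds : d r s = a1) by (case_colouring; intuition congruence).
  assert (Dt : d r t = a2) by (case_colouring; intuition congruence).
  pose proof (rooted_tree_colouring_a1 _ _ (eq_trans (Hpres Hrs) Ds)) as Es.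
  pose proof (rooted_tree_colouring_a2 _ _ (eq_trans (Hpres Hrt) Dt)) as Et.
  unfold joins in Es, Et.
  destruct Es as [[Es1 Es2]|[Es1 Es2]], Et as [[Et1 Et2]|[Et1 Et2]];
    try (exfalso; congruence); auto.
Qed.

Lemma preserving_automorphism_preserves_vcol v : c (g v) = c v.
Proof.
  destruct preserving_automorphism_fixes_root as [Gr [Gs Gt]].
  destruct (classic (v = r)) as [->|Nr]; [now rewrite Gr|].
  destruct (classic (v = s)) as [->|Ns]; [now rewrite Gs|].
  destruct (classic (v = t)) as [->|Nt]; [now rewrite Gt|].
  destruct (parent_spec (r := r) Hconn Nr) as [Hadj Hdepth].
  pose proof (eq_trans (Hpres Hadj) (rooted_tree_colouring_parent Nr Ns Nt)) as E.
  destruct (rooted_tree_colouring_code _ _ E) as [[_ Ec]|[Edepth _]]; [exact Ec|].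
  rewrite !(depth_automorphism Hconn Hg Gr) in Edepth. lia.
Qed.

End PreservingAutomorphism.

Theorem distinguishing_ecol_of_vcol :
  distinguishing_vcol adj c ->
  exists d : V -> V -> C, edge_colouring adj d /\ distinguishing_ecol adj d.
Proof.
  intro Hc. exists d. split; [exact rooted_tree_colouring_edge_colouring|].
  intros g Hg Hpres. apply Hc; [exact Hg|].
  exact (preserving_automorphism_preserves_vcol Hg Hpres).
Qed.

End RootedTreeColouring.

Theorem mainTheorem7 (V : Type) (adj : V -> V -> Prop) (C : Type)
  (Hsimple : simple_graph adj) (Hconn : connected adj)
  (H3 : at_least_three_vertices V)
  (HD : is_D adj C) (Hinf : infinite_type C) :
  exists d : V -> V -> C, edge_colouring adj d /\ distinguishing_ecol adj d.
Proof.
  destruct HD as [[c Hc] _].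
  destruct (infinite_type_nat_embedding Hinf) as [e He].
  destruct (exists_vertex_with_two_neighbours (proj1 Hsimple) Hconn H3)
    as (r & s & t & Hrs & Hrt & Hst).
  apply (distinguishing_ecol_of_vcol (c := c) (code := hotel_shift e 3) (a0 := e 0) (a1 := e 1)
           (a2 := e 2) Hsimple Hconn r Hrs Hrt Hst);
    try (intro x; apply hotel_shift_avoids; [exact He|lia]);
    try (intro E; apply He in E; discriminate).
  - now apply hotel_shift_injective.
  - exact Hc.
Qed.
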